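(* Let $H\in\mathbb{R}^{N\times n}$ with $H^TH$ positive definite, written as $H^TH=P\,\mathrm{diag}\{\lambda_1,\dots,\lambda_n\}P^{-1}$ with $P$ orthogonal and $\lambda_1\ge\lambda_2\ge\dots\ge\lambda_n>0$. Let $c\ge0$ be an integer and, for $\bar\mu\ge\lambda_2$, let $R=P\,\mathrm{diag}\{\lambda_{R,1},\dots,\lambda_{R,n}\}P^{-1}$ with $\lambda_{R,i}=\max\{\bar\mu-\lambda_i,0\}$ (so $R$ and $F(R)$ are symmetric positive semidefinite). Define $F(R)=R(H^TH+R)^{-1}$, $F_{ar}(R)=(H^TH)^{-1}F(R)^{c+1}$, $\mathrm{Cond}(R)=\|H^TH+R\|\,\|(H^TH+R)^{-1}\|$ and $\mathrm{Obj}(R)=\|F_{ar}(R)\|\cdot\mathrm{Cond}(R)$. Then: $\mathrm{Obj}(R)$ is a bounded function of $\bar\mu$ and has a global minimum; for $\bar\mu\ge\lambda_1$, $\mathrm{Cond}(R)$ attains its minimal possible value $1$ (maximal generalizability); and if $\lambda_1\ge\bar\mu\ge\lambda_2$, the largest eigenvalue of $H^TH+R$ equals $\lambda_1$, the largest eigenvalue of $H^TH$.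
   Context: $\|\cdot\|$ is the spectral norm. The paper measures the generalizability of the network by the condition number $\mathrm{Cond}(R)$ of $H^TH+R$: a smaller condition number means better generalizability, and ''maximal generalizability'' means $\mathrm{Cond}(R)$ is minimized. *)

From HB Require Import structures.
From mathcomp Require Import all_boot all_order all_algebra.
From mathcomp Require Import classical_sets reals.
Set Implicit Arguments. Unset Strict Implicit. Unset Printing Implicit Defensive.
Import Order.TTheory GRing.Theory Num.Theory.
Local Open Scope ring_scope.
Local Open Scope classical_set_scope.

Section Defs.
Variable R : realType.

Definition vnorm {n : nat} (x : 'cV[R]_n) : R :=
  Num.sqrt (\sum_(i < n) x i 0 ^+ 2).

Definition specnorm {m n : nat} (A : 'M[R]_(m, n)) : R :=
  sup [set vnorm (A *m x) | x in [set x : 'cV[R]_n | vnorm x = 1]].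

Definition orthogonal_mx {n : nat} (P : 'M[R]_n) : Prop := P^T *m P = 1%:M.

Definition posdef {n : nat} (A : 'M[R]_n) : Prop :=
  A^T = A /\ forall x : 'cV[R]_n, x != 0 -> 0 < (x^T *m A *m x) 0 0.

Definition Rreg {n : nat} (P : 'M[R]_n) (lam : nat -> R) (mu : R) : 'M[R]_n :=
  P *m diag_mx (\row_(i < n) Num.max (mu - lam i) 0) *m invmx P.

Definition Fmx {n : nat} (HtH Rm : 'M[R]_n) : 'M[R]_n := Rm *m invmx (HtH + Rm).

Definition Far {n : nat} (c : nat) (HtH Rm : 'M[R]_n) : 'M[R]_n :=
  invmx HtH *m (Fmx HtH Rm) ^+ c.+1.

Definition Cond {n : nat} (HtH Rm : 'M[R]_n) : R :=
  specnorm (HtH + Rm) * specnorm (invmx (HtH + Rm)).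

Definition Obj {n : nat} (c : nat) (HtH Rm : 'M[R]_n) : R :=
  specnorm (Far c HtH Rm) * Cond HtH Rm.

Definition largest_eigenvalue {n : nat} (A : 'M[R]_n) (a : R) : Prop :=
  eigenvalue A a /\ forall b, eigenvalue A b -> b <= a.

End Defs.

(* Because P is orthogonal, H^T H, R, H^T H + R, their inverses, F(R) and F_ar(R)
   are all of the form P diag(f) P^T, and the spectral norm of such a matrix is
   max_i |f i|.  With lam 0 >= ... >= lam n.-1 > 0 and mu >= lam n.-1 this gives
   Cond(R) = max(mu, lam 0) / mu and ||F_ar(R)|| = ((mu - lam n.-1) / mu)^(c+1) / lam n.-1,
   attained on the eigenvector of the smallest eigenvalue.  So Obj is an explicit
   function of mu: bounded by lam 0 / (lam 1 * lam n.-1) for mu >= lam 1,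
   nondecreasing for mu >= lam 0, and continuous on [lam 1, lam 0], where it
   reaches its minimum. *)

From HB Require Import structures.
From mathcomp Require Import all_boot all_order all_algebra.
From mathcomp Require Import classical_sets reals topology normedtype derive realfun.
Set Implicit Arguments. Unset Strict Implicit. Unset Printing Implicit Defensive.
Import Order.TTheory GRing.Theory Num.Theory.
Import numFieldNormedType.Exports.
Local Open Scope ring_scope.

Section EuclideanNorm.
Variable R : realType.

Lemma vnorm_ge0 n (x : 'cV[R]_n) : 0 <= vnorm x.
Proof. exact: sqrtr_ge0. Qed.

Lemma vnorm0 n : vnorm (0 : 'cV[R]_n) = 0.
Proof. by rewrite /vnorm big1 ?sqrtr0 // => i _; rewrite mxE expr0n. Qed.

Lemma vnormZ n (k : R) (x : 'cV[R]_n) : vnorm (k *: x) = `|k| * vnorm x.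
Proof.
rewrite /vnorm -sqrtr_sqr -sqrtrM ?sqr_ge0 // mulr_sumr.
by congr Num.sqrt; apply: eq_bigr => i _; rewrite mxE exprMn.
Qed.

Lemma normr_le_vnorm n (x : 'cV[R]_n) i : `|x i 0| <= vnorm x.
Proof.
rewrite /vnorm -sqrtr_sqr; apply: ler_wsqrtr.
by rewrite (bigD1 i) //= lerDl; apply: sumr_ge0 => j _; exact: sqr_ge0.
Qed.

Lemma vnorm_le_sum n (x : 'cV[R]_n) : vnorm x <= \sum_(i < n) `|x i 0|.
Proof.
set S := \sum_(i < n) _; have S_ge0 : 0 <= S by apply: sumr_ge0.
rewrite /vnorm -(ger0_norm S_ge0) -sqrtr_sqr; apply: ler_wsqrtr.
rewrite expr2 {2}/S mulr_sumr; apply: ler_sum => i _.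
rewrite -real_normK ?num_real // expr2 ler_wpM2r //.
by rewrite /S (bigD1 i) //= lerDl; apply: sumr_ge0.
Qed.

Lemma vnorm_orthogonal n (Q : 'M[R]_n) (x : 'cV[R]_n) :
  orthogonal_mx Q -> vnorm (Q *m x) = vnorm x.
Proof.
have sum_sq (y : 'cV[R]_n) : \sum_(i < n) y i 0 ^+ 2 = (y^T *m y) 0 0 :> R.
  by rewrite mxE; apply: eq_bigr => i _; rewrite mxE expr2.
by move=> hQ; rewrite /vnorm !sum_sq trmx_mul -mulmxA (mulmxA Q^T) hQ mul1mx.
Qed.

Lemma vnorm_diag_delta n (f : 'I_n -> R) k :
  vnorm (diag_mx (\row_i f i) *m delta_mx k 0) = `|f k|.
Proof.
rewrite /vnorm (bigD1 k) //= big1 ?addr0 ?sqrtr_sqr => [|i /negPf ik].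
  by rewrite mul_diag_mx !mxE !eqxx mulr1.
by rewrite mul_diag_mx !mxE ik mulr0 expr0n.
Qed.

Lemma vnorm_delta n (k : 'I_n) : vnorm (delta_mx k 0 : 'cV[R]_n) = 1.
Proof.
rewrite /vnorm (bigD1 k) //= big1 ?addr0 => [|i /negPf ik].
  by rewrite mxE !eqxx expr1n sqrtr1.
by rewrite mxE ik expr0n.
Qed.

Lemma vnorm_diag_le n (f : 'I_n -> R) (M : R) (x : 'cV[R]_n) :
  0 <= M -> (forall i, `|f i| <= M) ->
  vnorm (diag_mx (\row_i f i) *m x) <= M * vnorm x.
Proof.
move=> M_ge0 hf; rewrite /vnorm -(ger0_norm M_ge0) -sqrtr_sqr -sqrtrM ?sqr_ge0 //.
apply: ler_wsqrtr; rewrite mulr_sumr; apply: ler_sum => i _.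
rewrite mul_diag_mx !mxE exprMn ler_wpM2r ?sqr_ge0 //.
by rewrite -real_normK ?num_real // lerXn2r ?nnegrE // (le_trans (hf i)) ?ler_norm.
Qed.

End EuclideanNorm.

Section SpectralNorm.
Variable R : realType.

Lemma specnorm_has_ubound m n (A : 'M[R]_(m, n)) :
  has_ubound [set vnorm (A *m x) | x in [set x : 'cV[R]_n | vnorm x = 1]].
Proof.
exists (\sum_(i < m) \sum_(j < n) `|A i j|) => _ [x /= x1 <-].
apply: le_trans (vnorm_le_sum _) _; apply: ler_sum => i _.
rewrite mxE; apply: le_trans (ler_norm_sum _ _ _) _; apply: ler_sum => j _.
by rewrite normrM ler_piMr // -x1 normr_le_vnorm.
Qed.

Lemma vnorm_mulmx_le m n (A : 'M[R]_(m, n)) x :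
  vnorm (A *m x) <= specnorm A * vnorm x.
Proof.
have [->|x_neq0] := eqVneq x 0; first by rewrite mulmx0 !vnorm0 mulr0.
have x_gt0 : 0 < vnorm x.
  rewrite lt_def vnorm_ge0 andbT; apply: contraNneq x_neq0 => x0.
  apply/eqP/colP => i; rewrite mxE; apply/normr0_eq0/eqP.
  by rewrite eq_le normr_ge0 andbT -x0 normr_le_vnorm.
have [u u1 xE] : exists2 u, vnorm u = 1 & x = vnorm x *: u.
  exists ((vnorm x)^-1 *: x); last by rewrite scalerA divff ?gt_eqF ?scale1r.
  by rewrite vnormZ ger0_norm ?invr_ge0 ?vnorm_ge0 ?mulVf ?gt_eqF.
rewrite {1}xE -scalemxAr vnormZ ger0_norm ?vnorm_ge0 // mulrC ler_wpM2r ?vnorm_ge0 //.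
by apply: ub_le_sup; [exact: specnorm_has_ubound | exists u].
Qed.

Lemma specnorm_ge0 m n (A : 'M[R]_(m, n)) : (0 < n)%N -> 0 <= specnorm A.
Proof.
move=> n_gt0; have := vnorm_mulmx_le A (delta_mx (Ordinal n_gt0) 0).
by rewrite vnorm_delta mulr1; apply: le_trans; exact: vnorm_ge0.
Qed.

Lemma specnorm_attained m n (A : 'M[R]_(m, n)) (x0 : 'cV[R]_n) :
  vnorm x0 = 1 -> (forall x, vnorm x = 1 -> vnorm (A *m x) <= vnorm (A *m x0)) ->
  specnorm A = vnorm (A *m x0).
Proof.
move=> x01 hub; apply/eqP; rewrite eq_le; apply/andP; split.
  by apply: ge_sup; [exists (vnorm (A *m x0)), x0 | move=> _ [x /= x1 <-]; exact: hub].
by apply: ub_le_sup; [exact: specnorm_has_ubound | exists x0].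
Qed.

Lemma specnorm_mul_invmx_ge1 n (A : 'M[R]_n) : (0 < n)%N -> A \in unitmx ->
  1 <= specnorm A * specnorm (invmx A).
Proof.
move=> n_gt0 A_unit; pose d : 'cV[R]_n := delta_mx (Ordinal n_gt0) 0.
have : vnorm (A *m (invmx A *m d)) <= specnorm A * vnorm (invmx A *m d).
  exact: vnorm_mulmx_le.
rewrite mulmxA mulmxV // mul1mx vnorm_delta => /le_trans; apply.
rewrite ler_wpM2l ?specnorm_ge0 //.
by have := vnorm_mulmx_le (invmx A) d; rewrite vnorm_delta mulr1.
Qed.

End SpectralNorm.

Lemma posdef_unitmx (R : realType) n (A : 'M[R]_n) : posdef A -> A \in unitmx.
Proof.
move=> [A_sym A_pos]; rewrite unitmxE unitfE; apply/negP => /det0P [v v_neq0 vA0].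
have Avt0 : A *m v^T = 0 by rewrite -A_sym -trmx_mul vA0 trmx0.
by have := A_pos v^T; rewrite trmx_eq0 v_neq0 -mulmxA Avt0 mulmx0 mxE ltxx => /(_ isT).
Qed.

Section SpectralCalculus.
Variables (R : realType) (n : nat) (P : 'M[R]_n).
Hypothesis P_orth : orthogonal_mx P.

Definition spectral_mx (f : 'I_n -> R) : 'M[R]_n := P *m diag_mx (\row_i f i) *m P^T.

Lemma orthogonal_mx_tr : P *m P^T = 1%:M.
Proof. exact: mulmx1C. Qed.

Lemma invmx_orthogonal : invmx P = P^T.
Proof.
have [P_unit _] := mulmx1_unit orthogonal_mx_tr.
by rewrite -[invmx P]mulmx1 -orthogonal_mx_tr mulmxA mulVmx ?mul1mx.
Qed.

Lemma eq_spectral_mx f g : f =1 g -> spectral_mx f = spectral_mx g.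
Proof. by move=> fg; congr (_ *m diag_mx _ *m _); apply/rowP => i; rewrite !mxE. Qed.

Lemma spectral_mxD f g : spectral_mx f + spectral_mx g = spectral_mx (f \+ g).
Proof.
rewrite /spectral_mx -mulmxDl -mulmxDr; congr (_ *m _ *m _).
by apply/matrixP => i j; rewrite !mxE -mulrnDl.
Qed.

Lemma spectral_mxM f g : spectral_mx f *m spectral_mx g = spectral_mx (f \* g).
Proof.
rewrite /spectral_mx !mulmxA -[P *m _ *m P^T *m P]mulmxA P_orth mulmx1.
rewrite -[P *m _ *m _]mulmxA mulmx_diag.
by congr (_ *m diag_mx _ *m _); apply/rowP => i; rewrite !mxE.
Qed.

Lemma spectral_mx1 : spectral_mx (fun=> 1) = 1%:M.
Proof.
rewrite /spectral_mx; have -> : diag_mx (\row_(i < n) 1) = 1%:M :> 'M[R]_n.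
  by apply/matrixP => i j; rewrite !mxE.
by rewrite mulmx1 orthogonal_mx_tr.
Qed.

Lemma spectral_mxX f k : spectral_mx f ^+ k = spectral_mx (fun i => f i ^+ k).
Proof.
elim: k => [|k IHk].
  rewrite expr0; transitivity (spectral_mx (fun=> 1)); first by rewrite spectral_mx1.
  by apply: eq_spectral_mx => i; rewrite expr0.
rewrite exprS IHk [_ * _]spectral_mxM.
by apply: eq_spectral_mx => i; rewrite exprS.
Qed.

Lemma spectral_mxV f : (forall i, f i != 0) ->
  invmx (spectral_mx f) = spectral_mx (fun i => (f i)^-1).
Proof.
move=> f_neq0; have fV1 : spectral_mx f *m spectral_mx (fun i => (f i)^-1) = 1%:M.
  by rewrite spectral_mxM -spectral_mx1; apply: eq_spectral_mx => i; rewrite /= divff.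
have [f_unit _] := mulmx1_unit fV1.
by rewrite -[invmx _]mulmx1 -fV1 mulmxA mulVmx ?mul1mx.
Qed.

Lemma specnorm_spectral_mx f k : (forall i, `|f i| <= `|f k|) ->
  specnorm (spectral_mx f) = `|f k|.
Proof.
have P_tr_orth : orthogonal_mx P^T by rewrite /orthogonal_mx trmxK orthogonal_mx_tr.
have vnorm_spectral x : vnorm (spectral_mx f *m x) = vnorm (diag_mx (\row_i f i) *m (P^T *m x)).
  by rewrite -!mulmxA vnorm_orthogonal.
have PtP x : P^T *m (P *m x) = x by rewrite mulmxA P_orth mul1mx.
move=> f_le; rewrite (@specnorm_attained _ _ _ _ (P *m delta_mx k 0)).
- by rewrite vnorm_spectral PtP vnorm_diag_delta.
- by rewrite vnorm_orthogonal ?vnorm_delta.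
move=> x x1; rewrite !vnorm_spectral PtP vnorm_diag_delta.
by rewrite -[X in _ <= X]mulr1 -x1 -(vnorm_orthogonal x P_tr_orth) vnorm_diag_le.
Qed.

Lemma largest_eigenvalue_spectral_mx f k : (forall i, f i <= f k) ->
  largest_eigenvalue (spectral_mx f) (f k).
Proof.
move=> f_le; split.
  apply/eigenvalueP; exists (delta_mx 0 k *m P^T).
    rewrite /spectral_mx !mulmxA -[_ *m P^T *m P]mulmxA P_orth mulmx1 scalemxAl.
    congr (_ *m _); apply/rowP => j; rewrite mul_mx_diag !mxE.
    by have [->|] := eqVneq j k; rewrite ?mulr1 ?mul1r ?mulr0 ?mul0r.
  apply: contra_neq (oner_neq0 R) => v0.
  have := congr1 (fun v => (v *m P) 0 k) v0.
  by rewrite -mulmxA P_orth mulmx1 mul0mx !mxE !eqxx.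
move=> b /eigenvalueP [v vb v_neq0].
have wb : (v *m P) *m diag_mx (\row_i f i) = b *: (v *m P).
  by rewrite scalemxAl -vb /spectral_mx !mulmxA -[_ *m P^T *m P]mulmxA P_orth mulmx1.
have w_neq0 : v *m P != 0.
  apply: contraNneq v_neq0 => vP0.
  by rewrite -[v]mulmx1 -orthogonal_mx_tr mulmxA vP0 mul0mx.
have [i [j wj]] := matrix0Pn _ w_neq0; rewrite (ord1 i) in wj.
move: (v *m P) => w in wb wj *.
have : (w *m diag_mx (\row_i f i)) 0 j = (b *: w) 0 j by rewrite wb.
rewrite mul_mx_diag !mxE mulrC => /(mulIf wj) <-.
exact: f_le.
Qed.

End SpectralCalculus.

Section ObjectiveProfile.
Variables (R : realType) (c : nat) (a l0 : R).
Hypothesis a_gt0 : 0 < a.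

Definition obj_profile (mu : R) : R :=
  a^-1 * ((mu - a) / mu) ^+ c.+1 * (Num.max mu l0 / mu).

Lemma obj_profile_ge0 mu : a <= mu -> 0 <= obj_profile mu.
Proof.
move=> a_le_mu; have mu_gt0 := lt_le_trans a_gt0 a_le_mu.
rewrite !mulr_ge0 ?exprn_ge0 ?divr_ge0 ?invr_ge0 ?subr_ge0 ?(ltW a_gt0) ?(ltW mu_gt0) //.
by rewrite le_max (ltW mu_gt0).
Qed.

Lemma obj_profile_le l1 mu : a <= l1 -> l1 <= l0 -> l1 <= mu ->
  obj_profile mu <= a^-1 * (l0 / l1).
Proof.
move=> a_le_l1 l1_le_l0 l1_le_mu.
have l1_gt0 := lt_le_trans a_gt0 a_le_l1; have mu_gt0 := lt_le_trans l1_gt0 l1_le_mu.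
rewrite /obj_profile -mulrA ler_wpM2l ?invr_ge0 ?(ltW a_gt0) // -[_ / l1]mul1r.
apply: ler_pM; rewrite ?exprn_ge0 ?divr_ge0 ?subr_ge0 ?(le_trans a_le_l1) ?(ltW mu_gt0) //.
- by rewrite le_max (ltW mu_gt0).
- rewrite exprn_ile1 ?divr_ge0 ?subr_ge0 ?(le_trans a_le_l1) ?(ltW mu_gt0) //.
  by rewrite ler_pdivrMr // mul1r gerBl ltW.
have [mu_le_l0|l0_lt_mu] := leP mu l0.
  by rewrite ler_wpM2l ?(le_trans (ltW l1_gt0)) // lef_pV2.
by rewrite divff ?gt_eqF // ler_pdivlMr // mul1r.
Qed.

Lemma obj_profile_ge_l0 mu : a <= l0 -> l0 <= mu -> obj_profile l0 <= obj_profile mu.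
Proof.
move=> a_le_l0 l0_le_mu; have l0_gt0 := lt_le_trans a_gt0 a_le_l0.
have mu_gt0 := lt_le_trans l0_gt0 l0_le_mu.
rewrite /obj_profile !max_l // !divff ?gt_eqF // !mulr1 ler_wpM2l ?invr_ge0 ?(ltW a_gt0) //.
rewrite lerXn2r ?nnegrE ?divr_ge0 ?subr_ge0 ?(ltW l0_gt0) ?(ltW mu_gt0) ?(le_trans a_le_l0) //.
by rewrite !mulrBl !divff ?gt_eqF // lerD2l lerN2 ler_wpM2l ?(ltW a_gt0) // lef_pV2.
Qed.

Lemma obj_profile_core_continuous x : x != 0 ->
  {for x, continuous (fun mu : R => a^-1 * ((mu - a) / mu) ^+ c.+1 * (l0 / mu))}.
Proof.
move=> x_neq0.
have id_cont : {for x, continuous (fun y : R => y)} by exact: cvg_id.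
have inv_cont : {for x, continuous (fun y : R => y^-1)} by exact: continuousV.
have cst_cont (k : R) : {for x, continuous (fun=> k)} by exact: cst_continuous.
have ratio_cont : {for x, continuous (fun y : R => (y - a) / y)}.
  exact: (continuousM (s := fun y => y - a) (continuousB id_cont (cst_cont _)) inv_cont).
have pow_cont := continuous_comp ratio_cont (@exprn_continuous R c.+1 ((x - a) / x)).
exact: (continuousM (continuousM (s := fun=> a^-1) (cst_cont _) pow_cont)
                    (continuousM (s := fun=> l0) (cst_cont _) inv_cont)).
Qed.

Lemma obj_profile_min l1 : a <= l1 -> l1 <= l0 ->
  exists2 mu0, l1 <= mu0 <= l0 &
    forall mu, l1 <= mu -> obj_profile mu0 <= obj_profile mu.
Proof.
move=> a_le_l1 l1_le_l0.
have [|mu0] := EVT_min (f := fun mu => a^-1 * ((mu - a) / mu) ^+ c.+1 * (l0 / mu)) l1_le_l0.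
  apply: continuous_in_subspaceT => x; rewrite inE /= in_itv /= => /andP [l1_le_x _].
  by apply: obj_profile_core_continuous; rewrite gt_eqF // (lt_le_trans a_gt0) ?(le_trans a_le_l1).
rewrite in_itv /= => /andP [l1_le_mu0 mu0_le_l0] mu0_min.
have profileE mu : mu <= l0 -> obj_profile mu = a^-1 * ((mu - a) / mu) ^+ c.+1 * (l0 / mu).
  by move=> mu_le_l0; rewrite /obj_profile max_r.
exists mu0 => [|mu l1_le_mu]; first by rewrite l1_le_mu0.
have [mu_le_l0|/ltW l0_le_mu] := leP mu l0.
  by rewrite !profileE // mu0_min // in_itv /= l1_le_mu.
apply: le_trans (obj_profile_ge_l0 (le_trans a_le_l1 l1_le_l0) l0_le_mu).
by rewrite !profileE // mu0_min // in_itv /= l1_le_l0 lexx.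
Qed.

End ObjectiveProfile.

Section FarEigenvalue.
Variables (R : realType) (c : nat).

(* The eigenvalue of F_ar(R) on the eigenspace of H^T H for the eigenvalue l. *)
Definition far_eigenvalue (mu l : R) : R := l^-1 * (Num.max (mu - l) 0 / Num.max mu l) ^+ c.+1.

Lemma far_eigenvalue_ge0 mu l : 0 < l -> 0 <= far_eigenvalue mu l.
Proof.
move=> l_gt0; have max_ge0 : 0 <= Num.max mu l by rewrite le_max (ltW l_gt0) orbT.
by rewrite mulr_ge0 ?invr_ge0 ?(ltW l_gt0) // exprn_ge0 // divr_ge0 // le_max lexx orbT.
Qed.

Lemma far_eigenvalue_antitone mu a l : 0 < a -> a <= l -> far_eigenvalue mu l <= far_eigenvalue mu a.
Proof.
move=> a_gt0 a_le_l; have l_gt0 := lt_le_trans a_gt0 a_le_l.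
have [l_le_mu|mu_lt_l] := leP l mu; last first.
  rewrite /far_eigenvalue [Num.max (mu - l) 0]max_r ?subr_le0 ?(ltW mu_lt_l) //.
  by rewrite mul0r expr0n mulr0 far_eigenvalue_ge0.
have a_le_mu := le_trans a_le_l l_le_mu; have mu_gt0 := lt_le_trans l_gt0 l_le_mu.
rewrite /far_eigenvalue !max_l ?subr_ge0 //; apply: ler_pM.
- by rewrite invr_ge0 ltW.
- by rewrite exprn_ge0 // divr_ge0 ?subr_ge0 ?(ltW mu_gt0).
- by rewrite lef_pV2.
rewrite lerXn2r ?nnegrE ?divr_ge0 ?subr_ge0 ?(ltW mu_gt0) //.
by rewrite ler_wpM2r ?invr_ge0 ?(ltW mu_gt0) // lerB.
Qed.

End FarEigenvalue.

Section Regularization.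
Variables (R : realType) (n : nat) (P : 'M[R]_n) (lam : nat -> R) (c : nat).
Hypotheses (P_orth : orthogonal_mx P) (n_gt0 : (0 < n)%N).
Hypothesis lam_sorted : forall i j : nat, (i <= j)%N -> (j < n)%N -> lam j <= lam i.
Hypothesis lam_min_gt0 : 0 < lam n.-1.

Let HtH := spectral_mx P (fun i => lam i).
Let i_max : 'I_n := Ordinal n_gt0.
Let i_min : 'I_n := Ordinal (etrans (ltn_predL n) n_gt0).

Lemma lam_ge_min (i : 'I_n) : lam n.-1 <= lam i.
Proof. by apply: lam_sorted; rewrite // -ltnS prednK. Qed.

Lemma lam_le_max (i : 'I_n) : lam i <= lam 0.
Proof. exact: lam_sorted. Qed.

Lemma Rreg_spectral mu : Rreg P lam mu = spectral_mx P (fun i => Num.max (mu - lam i) 0).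
Proof. by rewrite /Rreg (invmx_orthogonal P_orth). Qed.

Lemma HtH_add_Rreg mu : HtH + Rreg P lam mu = spectral_mx P (fun i => Num.max mu (lam i)).
Proof.
rewrite Rreg_spectral spectral_mxD; apply: eq_spectral_mx => i /=.
by rewrite addr_maxr addrCA subrr !addr0.
Qed.

Lemma Cond_Rreg mu : lam n.-1 <= mu -> Cond HtH (Rreg P lam mu) = Num.max mu (lam 0) / mu.
Proof.
move=> lam_min_le_mu; have mu_gt0 := lt_le_trans lam_min_gt0 lam_min_le_mu.
have max_gt0 l : 0 < Num.max mu l by rewrite lt_max mu_gt0.
rewrite /Cond HtH_add_Rreg (spectral_mxV P_orth) => [|i]; last exact: lt0r_neq0.
rewrite (specnorm_spectral_mx P_orth (k := i_max)) => [|i]; last first.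
  by rewrite !gtr0_norm // le_max2 ?lam_le_max.
rewrite (specnorm_spectral_mx P_orth (k := i_min)) => [|i]; last first.
  by rewrite !gtr0_norm ?invr_gt0 // lef_pV2 ?posrE // le_max2 ?lam_ge_min.
by rewrite /= [Num.max mu (lam n.-1)]max_l // !gtr0_norm ?invr_gt0.
Qed.

Lemma specnorm_Far mu : lam n.-1 <= mu ->
  specnorm (Far c HtH (Rreg P lam mu)) = (lam n.-1)^-1 * ((mu - lam n.-1) / mu) ^+ c.+1.
Proof.
move=> lam_min_le_mu; have mu_gt0 := lt_le_trans lam_min_gt0 lam_min_le_mu.
have lam_gt0 i : 0 < lam (nat_of_ord i) := lt_le_trans lam_min_gt0 (lam_ge_min i).
have FarE : Far c HtH (Rreg P lam mu) = spectral_mx P (fun i => far_eigenvalue c mu (lam i)).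
  rewrite /Far /Fmx HtH_add_Rreg Rreg_spectral.
  rewrite (spectral_mxV P_orth (f := fun i => lam i)) => [|i]; last exact: lt0r_neq0.
  rewrite (spectral_mxV P_orth) => [|i]; last by rewrite lt0r_neq0 // lt_max mu_gt0.
  by rewrite (spectral_mxM P_orth) (spectral_mxX P_orth) (spectral_mxM P_orth).
rewrite FarE (specnorm_spectral_mx P_orth (k := i_min)) => [|i]; last first.
  by rewrite !ger0_norm ?far_eigenvalue_ge0 ?far_eigenvalue_antitone ?lam_ge_min.
by rewrite ger0_norm ?far_eigenvalue_ge0 // /far_eigenvalue /= !max_l ?subr_ge0.
Qed.

Lemma Obj_Rreg mu : lam n.-1 <= mu ->
  Obj c HtH (Rreg P lam mu) = obj_profile c (lam n.-1) (lam 0) mu.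
Proof. by move=> lam_min_le_mu; rewrite /Obj specnorm_Far ?Cond_Rreg. Qed.

End Regularization.

Theorem proposition2 (R : realType) (N n : nat) (H : 'M[R]_(N, n))
  (P : 'M[R]_n) (lam : nat -> R) (c : nat)
  (hn : (1 < n)%N)
  (hpd : posdef (H^T *m H))
  (hP : orthogonal_mx P)
  (hdec : H^T *m H = P *m diag_mx (\row_(i < n) lam i) *m invmx P)
  (hsort : forall i j : nat, (i <= j)%N -> (j < n)%N -> lam j <= lam i)
  (hpos : 0 < lam n.-1) :
  (* Obj is bounded on mu >= lam_2 and attains a global minimum there *)
  ((exists B : R, forall mu, lam 1%N <= mu ->
       `|Obj c (H^T *m H) (Rreg P lam mu)| <= B) /\
   (exists mu0, lam 1%N <= mu0 /\
      forall mu, lam 1%N <= mu ->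
        Obj c (H^T *m H) (Rreg P lam mu0) <= Obj c (H^T *m H) (Rreg P lam mu)))
  /\
  (* mu >= lam_1 : Cond(R) = 1, its minimal possible value *)
  ((forall mu, lam 0%N <= mu -> Cond (H^T *m H) (Rreg P lam mu) = 1) /\
   (forall Rm : 'M[R]_n, posdef (H^T *m H + Rm) -> 1 <= Cond (H^T *m H) Rm))
  /\
  (* lam_1 >= mu >= lam_2 : the largest eigenvalue of H^T H + R is lam_1 *)
  (forall mu, lam 1%N <= mu <= lam 0%N ->
     largest_eigenvalue (H^T *m H) (lam 0%N) /\
     largest_eigenvalue (H^T *m H + Rreg P lam mu) (lam 0%N)).
Proof.
have n_gt0 : (0 < n)%N := ltnW hn.
have HtH_E : H^T *m H = spectral_mx P (fun i => lam i) by rewrite hdec invmx_orthogonal.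
have lam_min_le1 : lam n.-1 <= lam 1%N by apply: hsort; rewrite // -ltnS prednK.
have lam1_le0 : lam 1%N <= lam 0%N by exact: hsort.
have ObjE mu : lam 1%N <= mu ->
    Obj c (H^T *m H) (Rreg P lam mu) = obj_profile c (lam n.-1) (lam 0%N) mu.
  by move=> lam1_le_mu; rewrite HtH_E Obj_Rreg ?(le_trans lam_min_le1).
split; [split|split; [split|]].
- exists ((lam n.-1)^-1 * (lam 0%N / lam 1%N)) => mu lam1_le_mu.
  by rewrite ObjE // ger0_norm ?obj_profile_ge0 ?(le_trans lam_min_le1) ?(obj_profile_le _ hpos).
- have [mu0 /andP [lam1_le_mu0 _] mu0_min] := obj_profile_min c hpos lam_min_le1 lam1_le0.
  exists mu0; split=> [//|mu lam1_le_mu].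
  by rewrite !ObjE // mu0_min.
- move=> mu lam0_le_mu.
  have lam_min_le_mu := le_trans lam_min_le1 (le_trans lam1_le0 lam0_le_mu).
  by rewrite HtH_E Cond_Rreg // max_l // divff // lt0r_neq0 // (lt_le_trans hpos).
- by move=> Rm /posdef_unitmx; exact: specnorm_mul_invmx_ge1.
move=> mu /andP [_ mu_le_lam0]; rewrite HtH_E; split.
  exact: (largest_eigenvalue_spectral_mx hP (k := Ordinal n_gt0)) (lam_le_max hsort).
rewrite (HtH_add_Rreg _ hP) -[lam 0%N](max_r mu_le_lam0).
apply: (largest_eigenvalue_spectral_mx hP (k := Ordinal n_gt0)) => i.
by rewrite le_max2 ?(lam_le_max hsort).
Qed.
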